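(* Let $\tau$ be a full binary tree with survivals with parameters $p_0,p_1,p_2,q_0,q_1,q_2$, rooted at a type 1 vertex, such that $\mathbb P(\Vert\tau\Vert<\infty)=1$. Let $D_1$ and $D_2$ be the numbers of type 1 (left) and type 2 (right) fathers in $\tau$, the root counted as a left father when it has two children. Set $$P=\frac{p_0}{p_0+p_2},\qquad Q=\frac{q_0}{q_0+q_2}.$$ Then for all integers $n\geq1$ and $m\geq 0$, $$\mathbb P(D_1=n,\,D_2=m)=N(n+m,m+1)\,P^{m+1}(1-P)^{n}\,Q^{n}(1-Q)^{m},$$ i.e. the likelihood of $(P,Q)$ given $n$ left fathers and $m$ right fathers is $\mathscr L(P,Q\mid n,m)=N(n+m,m+1)P^{m+1}(1-P)^nQ^n(1-Q)^m$.
   Context: A full binary tree with survivals is a two-type Galton–Watson tree (types $1,2$; each vertex of type $j$ independently has $\alpha_1$ children of type 1 and $\alpha_2$ children of type 2 with probability $\mu^{(j)}(\alpha_1,\alpha_2)$, children ordered by type, so that of two siblings the left one has type 1 and the right one type 2) with offspring distribution $\mu^{(1)}(0,0)=p_0$, $\mu^{(1)}(1,0)=p_1$, $\mu^{(1)}(1,1)=p_2$, $\mu^{(2)}(0,0)=q_0$, $\mu^{(2)}(0,1)=q_1$, $\mu^{(2)}(1,1)=q_2$, where $p_0,p_1,p_2,q_0,q_1,q_2\in(0,1)$ and $p_0+p_1+p_2=q_0+q_1+q_2=1$. A father is a vertex with two children. $\Vert\tau\Vert$ is the number of edges of $\tau$. Narayana numbers: $N(n,k)=\frac1n\binom nk\binom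 n{k-1}$ for $n\geq1$, $1\le k\le n$. *)

From Stdlib Require Import Reals List Arith.
Import ListNotations.
Open Scope R_scope.

(* A vertex has 0 children (Leaf), 1 child (Unary; the child has the same
   type as its parent, since mu^(1)(1,0) and mu^(2)(0,1) are the only
   one-child configurations), or 2 children (Binary l r; l has type 1,
   r has type 2).  Types are thus determined by the root type. *)
Inductive tree : Type :=
| Leaf : tree
| Unary : tree -> tree
| Binary : tree -> tree -> tree.

Fixpoint edges (t : tree) : nat :=
  match t with
  | Leaf => 0
  | Unary u => S (edges u)
  | Binary l r => S (S (edges l + edges r))
  end.

(* Probability that the Galton-Watson tree rooted at a vertex of type
   [ty] (true = type 1, false = type 2) equals the finite tree [t]. *)
Fixpoint gw_weight (p0 p1 p2 q0 q1 q2 : R) (ty : bool) (t : tree) : R :=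
  match t with
  | Leaf => if ty then p0 else q0
  | Unary u => (if ty then p1 else q1) * gw_weight p0 p1 p2 q0 q1 q2 ty u
  | Binary l r => (if ty then p2 else q2)
                  * gw_weight p0 p1 p2 q0 q1 q2 true l
                  * gw_weight p0 p1 p2 q0 q1 q2 false r
  end.

(* Number of fathers (vertices with two children) of type 1 (when
   [which] = true) resp. type 2 (when [which] = false), in the tree [t]
   whose root has type [ty]. *)
Fixpoint fathers (which : bool) (ty : bool) (t : tree) : nat :=
  match t with
  | Leaf => 0
  | Unary u => fathers which ty u
  | Binary l r =>
      (if Bool.eqb which ty then 1 else 0)%nat
      + fathers which true l + fathers which false r
  end.

(* Enumeration (with fuel) of all trees with exactly k edges. *)
Fixpoint gen (fuel k : nat) : list tree :=
  match fuel with
  | O => match k with O => [Leaf] | _ => [] end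
  | S f =>
      match k with
      | O => [Leaf]
      | S O => map Unary (gen f O)
      | S (S j as k') =>
          map Unary (gen f k')
          ++ flat_map (fun i => flat_map (fun l => map (Binary l) (gen f (j - i)))
                                           (gen f i))
                      (seq 0 (S j))
      end
  end.

Definition trees_of_size (k : nat) : list tree := gen k k.

Definition sumR (l : list R) : R := fold_right Rplus 0 l.

Definition mass_size (p0 p1 p2 q0 q1 q2 : R) (pred : tree -> bool) (k : nat) : R :=
  sumR (map (gw_weight p0 p1 p2 q0 q1 q2 true) (filter pred (trees_of_size k))).

Definition narayana (n k : nat) : R := / INR n * C n k * C n (k - 1).

From Stdlib Require Import Reals List Arith Lia Lra.
From Coquelicot Require Import Hierarchy Series.
Import ListNotations.
Open Scope R_scope.

(* Write f_ty(n, m) for the probability that the tree below a type-ty vertex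
   has n type-1 and m type-2 fathers.  Following the unary chain below the root
   until it ends in a leaf or in a father gives
     f_ty(n, m) = (leaf_ty [n = m = 0]
                   + father_ty sum_(a, b) f_1(a, b) f_2(n' - a, m' - b)) / (1 - unary_ty),
   where (n', m') are the fathers left to the two subtrees.  By induction on
   n + m, f_ty(n, m) is the number of trees with a type-ty root and these numbers
   of fathers (unary vertices removed), times the monomial weighting each type-1
   leaf, type-1 father, type-2 leaf and type-2 father by P, 1 - P, Q and 1 - Q:
   tree numbers convolve to forest numbers, and the monomials multiply.  For a
   type-1 root the tree number is the Narayana number N(n + m, m + 1). *)

Lemma sum_f_R0_zero (f : nat -> R) N :
  (forall i, (i <= N)%nat -> f i = 0) -> sum_f_R0 f N = 0.
Proof.
  intros Hf. induction N as [|N IH]; simpl.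
  - apply Hf; lia.
  - rewrite IH, Hf by auto with arith. ring.
Qed.

Lemma sum_f_R0_first (f : nat -> R) N :
  (forall i, (0 < i <= N)%nat -> f i = 0) -> sum_f_R0 f N = f 0%nat.
Proof.
  induction N as [|N IH]; intros Hf; simpl; [reflexivity|].
  rewrite IH by (intros; apply Hf; lia). rewrite (Hf (S N)) by lia. ring.
Qed.

Lemma sum_f_R0_shift (f : nat -> R) N :
  sum_f_R0 f (S N) = f 0%nat + sum_f_R0 (fun i => f (S i)) N.
Proof. now rewrite decomp_sum by lia. Qed.

Lemma sum_f_R0_swap (f : nat -> nat -> R) N M :
  sum_f_R0 (fun i => sum_f_R0 (fun a => f i a) M) N =
  sum_f_R0 (fun a => sum_f_R0 (fun i => f i a) N) M.
Proof.
  induction N as [|N IH]; simpl; [reflexivity|].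
  rewrite IH, <- plus_sum. reflexivity.
Qed.

Lemma sum_f_R0_indicator (x N : nat) (g : nat -> R) :
  sum_f_R0 (fun a => if x =? a then g a else 0) N = if x <=? N then g x else 0.
Proof.
  induction N as [|N IH]; simpl.
  - now destruct x.
  - rewrite IH. destruct (Nat.leb_spec x N), (Nat.eqb_spec x (S N)), (Nat.leb_spec x (S N));
      try lia; subst; ring.
Qed.

Lemma sum_f_R0_indicator_pair (x x' N : nat) (u : R) :
  sum_f_R0 (fun a => if andb (x =? a) (x' =? N - a) then u else 0) N =
  if x + x' =? N then u else 0.
Proof.
  rewrite (sum_eq _ (fun a => if x =? a then if x' =? N - a then u else 0 else 0))
    by (intros; now destruct (x =? _)).
  rewrite sum_f_R0_indicator.
  destruct (Nat.leb_spec x N); destruct (Nat.eqb_spec x' (N - x));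
    destruct (Nat.eqb_spec (x + x') N); try lia; reflexivity.
Qed.

Lemma sumR_app (l l' : list R) : sumR (l ++ l') = sumR l + sumR l'.
Proof. induction l as [|x l IH]; simpl; [ring|]. rewrite IH. ring. Qed.

Lemma sumR_map_scal_l {A} (c : R) (f : A -> R) (l : list A) :
  sumR (map (fun x => c * f x) l) = c * sumR (map f l).
Proof. induction l as [|x l IH]; simpl; [ring|]. rewrite IH. ring. Qed.

Lemma sumR_flat_map {A B} (f : B -> R) (g : A -> list B) (l : list A) :
  sumR (map f (flat_map g l)) = sumR (map (fun x => sumR (map f (g x))) l).
Proof. induction l as [|x l IH]; simpl; [reflexivity|]. now rewrite map_app, sumR_app, IH. Qed.

Lemma sumR_map_seq (f : nat -> R) (N : nat) : sumR (map f (seq 0 (S N))) = sum_f_R0 f N.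
Proof.
  induction N as [|N IH]; [simpl; ring|].
  rewrite seq_S, map_app, sumR_app, IH. simpl. ring.
Qed.

Lemma sumR_map_filter {A} (f : A -> R) (p : A -> bool) (l : list A) :
  sumR (map f (filter p l)) = sumR (map (fun x => if p x then f x else 0) l).
Proof. induction l as [|x l IH]; simpl; [reflexivity|]. destruct (p x); simpl; rewrite IH; ring. Qed.

Lemma sumR_map_0 {A} (f : A -> R) (l : list A) : (forall x, f x = 0) -> sumR (map f l) = 0.
Proof. intros Hf. induction l as [|x l IH]; simpl; [reflexivity|]. rewrite Hf, IH. ring. Qed.

Lemma sumR_map_nonneg {A} (f : A -> R) (l : list A) :
  (forall x, 0 <= f x) -> 0 <= sumR (map f l).
Proof. intros Hf. induction l as [|x l IH]; simpl; [lra|]. specialize (Hf x). lra. Qed.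

(** * Two-dimensional convolution *)

Definition conv2 (f g : nat -> nat -> R) (n m : nat) : R :=
  sum_f_R0 (fun a => sum_f_R0 (fun b => f a b * g (n - a)%nat (m - b)%nat) m) n.

Lemma conv2_ext_l f f' g n m :
  (forall a b, f a b = f' a b) -> conv2 f g n m = conv2 f' g n m.
Proof. intros E. unfold conv2. apply sum_eq. intros. apply sum_eq. intros. now rewrite E. Qed.

Lemma conv2_plus_l f f' g n m :
  conv2 (fun a b => f a b + f' a b) g n m = conv2 f g n m + conv2 f' g n m.
Proof.
  unfold conv2. rewrite <- plus_sum. apply sum_eq. intros.
  rewrite <- plus_sum. apply sum_eq. intros. ring.
Qed.

Lemma conv2_plus_r f g g' n m :
  conv2 f (fun a b => g a b + g' a b) n m = conv2 f g n m + conv2 f g' n m.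
Proof.
  unfold conv2. rewrite <- plus_sum. apply sum_eq. intros.
  rewrite <- plus_sum. apply sum_eq. intros. ring.
Qed.

Lemma conv2_0_l g n m : conv2 (fun _ _ => 0) g n m = 0.
Proof. apply sum_f_R0_zero. intros. apply sum_f_R0_zero. intros. ring. Qed.

Lemma conv2_0_r f n m : conv2 f (fun _ _ => 0) n m = 0.
Proof. apply sum_f_R0_zero. intros. apply sum_f_R0_zero. intros. ring. Qed.

Lemma conv2_shift_l f g n m :
  conv2 (fun a b => match a with O => 0 | S a' => f a' b end) g n m =
  match n with O => 0 | S n' => conv2 f g n' m end.
Proof.
  unfold conv2. destruct n as [|n].
  - simpl. apply sum_f_R0_zero. intros. ring.
  - rewrite sum_f_R0_shift, sum_f_R0_zero by (intros; ring). now rewrite Rplus_0_l.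
Qed.

Lemma conv2_shift_r f g n m :
  conv2 (fun a b => match b with O => 0 | S b' => f a b' end) g n m =
  match m with O => 0 | S m' => conv2 f g n m' end.
Proof.
  unfold conv2. destruct m as [|m].
  - apply sum_f_R0_zero. intros. simpl. ring.
  - apply sum_eq. intros. now rewrite sum_f_R0_shift, Rmult_0_l, Rplus_0_l.
Qed.

Lemma conv2_delta_l g n m :
  conv2 (fun a b => if (a + b =? 0)%nat then 1 else 0) g n m = g n m.
Proof.
  unfold conv2. rewrite sum_f_R0_first.
  - rewrite sum_f_R0_first; [now rewrite !Nat.sub_0_r, Rmult_1_l|].
    intros b Hb. destruct b; [lia|]. simpl. ring.
  - intros a Ha. apply sum_f_R0_zero. intros b _.
    destruct a; [lia|]. simpl. ring.
Qed.

Lemma conv2_scale f f' g g' c n m :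
  (forall a b, (a <= n)%nat -> (b <= m)%nat -> f' a b * g' (n - a)%nat (m - b)%nat = c) ->
  conv2 (fun a b => f a b * f' a b) (fun a b => g a b * g' a b) n m = conv2 f g n m * c.
Proof.
  intros Hc. unfold conv2. rewrite Rmult_comm, scal_sum. apply sum_eq. intros a Ha.
  rewrite Rmult_comm, scal_sum. apply sum_eq. intros b Hb.
  rewrite <- (Hc a b) by assumption. ring.
Qed.

Lemma conv2_indicators (x y x' y' n m : nat) (w w' : R) :
  conv2 (fun a b => if andb (x =? a) (y =? b) then w else 0)
        (fun a b => if andb (x' =? a) (y' =? b) then w' else 0) n m =
  if andb (x + x' =? n) (y + y' =? m) then w * w' else 0.
Proof.
  unfold conv2.
  rewrite (sum_eq _ (fun a => if andb (x =? a) (x' =? n - a) then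
      sum_f_R0 (fun b => if andb (y =? b) (y' =? m - b) then w * w' else 0) m else 0)).
  - rewrite sum_f_R0_indicator_pair, sum_f_R0_indicator_pair.
    now destruct (x + x' =? n).
  - intros a _. destruct (andb (x =? a) (x' =? n - a)) eqn:Ea.
    + apply sum_eq. intros b _. apply andb_prop in Ea as [-> ->]. simpl.
      destruct (y =? b), (y' =? m - b); simpl; ring.
    + apply sum_f_R0_zero. intros b _.
      destruct (x =? a), (x' =? n - a), (y =? b), (y' =? m - b); simpl in *; ring || discriminate.
Qed.

Lemma sumR_conv2 {A B} (f : A -> nat -> nat -> R) (g : B -> nat -> nat -> R) l l' n m :
  sumR (map (fun x => sumR (map (fun y => conv2 (f x) (g y) n m) l')) l) =
  conv2 (fun a b => sumR (map (fun x => f x a b) l)) (fun a b => sumR (map (fun y => g y a b) l')) n m.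
Proof.
  induction l as [|x l IH]; simpl.
  - now rewrite conv2_0_l.
  - rewrite IH, conv2_plus_l. f_equal. clear IH.
    induction l' as [|y l' IH]; simpl.
    + now rewrite conv2_0_r.
    + now rewrite IH, conv2_plus_r.
Qed.

(** * Forest numbers *)

(* The number of forests of [i] trees with a type-1 root and [j] trees with a
   type-2 root (unary vertices removed, so every father has a type-1 and a
   type-2 child) having [n] type-1 and [m] type-2 fathers.  The recurrences
   [forest_number_S_l] and [forest_number_S_r] decide whether the first tree is
   a leaf or a father. *)
Definition forest_number (i j n m : nat) : R :=
  if orb (n + m + i =? 0) (n + m + j =? 0) then 1
  else INR (i * j + i * n + j * m) / (INR (n + m + i) * INR (n + m + j))
       * C (n + m + i) n * C (n + m + j) m.

Lemma forest_number_sym i j n m : forest_number i j n m = forest_number j i m n.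
Proof.
  unfold forest_number.
  replace (m + n)%nat with (n + m)%nat by lia.
  replace (j * i + j * m + i * n)%nat with (i * j + i * n + j * m)%nat by lia.
  rewrite Bool.orb_comm.
  destruct (orb _ _); [reflexivity|].
  rewrite (Rmult_comm (INR (n + m + j))). ring.
Qed.

Lemma INR_fact_neq_0 k : INR (fact k) <> 0.
Proof. apply not_0_INR, fact_neq_0. Qed.

Lemma INR_fact_S k : INR (fact (S k)) = INR (S k) * INR (fact k).
Proof. now rewrite fact_simpl, mult_INR. Qed.

Lemma forest_number_0_0 n m : forest_number 0 0 n m = if n + m =? 0 then 1 else 0.
Proof.
  unfold forest_number. rewrite !Nat.add_0_r, Bool.orb_diag.
  destruct (n + m =? 0); [reflexivity|].
  rewrite !Nat.mul_0_l. simpl INR. unfold Rdiv. ring.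
Qed.

Lemma forest_number_Sl_0 i j m :
  forest_number (S i) j 0 m = forest_number i j 0 m.
Proof.
  unfold forest_number. simpl Nat.add.
  destruct (Nat.eqb_spec (m + j) 0) as [Emj|Emj].
  { now rewrite !Bool.orb_true_r. }
  rewrite !Bool.orb_false_r, Nat.add_succ_r. simpl (S _ =? 0).
  destruct (Nat.eqb_spec (m + i) 0) as [Emi|Emi].
  - assert (m = 0 /\ i = 0)%nat as [-> ->] by lia.
    unfold C. simpl. rewrite Nat.mul_0_r, !Nat.add_0_r, Nat.sub_0_r.
    assert (INR j <> 0) by (apply not_0_INR; lia).
    pose proof (INR_fact_neq_0 j). field. auto.
  - unfold C. rewrite !Nat.sub_0_r, !Nat.mul_0_r, !Nat.add_0_r.
    assert (INR (m + i) <> 0) by (apply not_0_INR; lia).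
    assert (INR (m + j) <> 0) by (apply not_0_INR; lia).
    pose proof (INR_fact_neq_0 (m + i)). pose proof (INR_fact_neq_0 (S (m + i))).
    pose proof (INR_fact_neq_0 m). pose proof (INR_fact_neq_0 (m + j - m)).
    rewrite !plus_INR, !mult_INR, S_INR, plus_INR in *.
    simpl (INR (fact 0)). field. repeat split; auto.
    pose proof (pos_INR m). pose proof (pos_INR i). lra.
Qed.

Lemma forest_number_Sl_S i j n m :
  forest_number (S i) j (S n) m = forest_number i j (S n) m + forest_number (S i) (S j) n m.
Proof.
  unfold forest_number.
  replace (S n + m + S i)%nat with (S (S (n + m + i))) by lia.
  replace (S n + m + i)%nat with (S (n + m + i)) by lia.
  replace (n + m + S i)%nat with (S (n + m + i)) by lia.
  replace (S n + m + j)%nat with (S (n + m + j)) by lia.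
  replace (n + m + S j)%nat with (S (n + m + j)) by lia.
  simpl orb. cbv iota. unfold C.
  replace (S (S (n + m + i)) - S n)%nat with (S (m + i)) by lia.
  replace (S (n + m + i) - S n)%nat with (m + i)%nat by lia.
  replace (S (n + m + i) - n)%nat with (S (m + i)) by lia.
  rewrite (INR_fact_S (S (n + m + i))), (INR_fact_S (n + m + i)), (INR_fact_S n),
    (INR_fact_S (m + i)).
  pose proof (INR_fact_neq_0 (n + m + i)). pose proof (INR_fact_neq_0 n).
  pose proof (INR_fact_neq_0 (m + i)). pose proof (INR_fact_neq_0 (S (n + m + j))).
  pose proof (INR_fact_neq_0 m). pose proof (INR_fact_neq_0 (S (n + m + j) - m)).
  pose proof (pos_INR n). pose proof (pos_INR m). pose proof (pos_INR i). pose proof (pos_INR j).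
  repeat rewrite ?mult_INR, ?plus_INR, ?S_INR.
  field. repeat split; auto; lra.
Qed.

Lemma forest_number_S_l i j n m :
  forest_number (S i) j n m =
  forest_number i j n m + match n with O => 0 | S n' => forest_number (S i) (S j) n' m end.
Proof.
  destruct n as [|n].
  - rewrite forest_number_Sl_0. ring.
  - apply forest_number_Sl_S.
Qed.

Lemma forest_number_S_r i j n m :
  forest_number i (S j) n m =
  forest_number i j n m + match m with O => 0 | S m' => forest_number (S i) (S j) n m' end.
Proof.
  rewrite !(forest_number_sym i), forest_number_S_l.
  destruct m; [ring|]. now rewrite (forest_number_sym (S j)).
Qed.

(* Concatenation of forests. *)
Lemma conv2_forest_number i j i' j' n m :
  conv2 (forest_number i j) (forest_number i' j') n m = forest_number (i + i') (j + j') n m.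
Proof.
  remember (2 * n + 2 * m + i + j)%nat as K eqn:HK.
  revert i j n m HK. induction K as [K IHK] using lt_wf_ind. intros i j n m HK.
  assert (IH : forall i j n m, (2 * n + 2 * m + i + j < K)%nat ->
            conv2 (forest_number i j) (forest_number i' j') n m =
            forest_number (i + i') (j + j') n m).
  { intros. eapply IHK; [|reflexivity]. lia. }
  destruct i as [|i].
  - destruct j as [|j].
    + rewrite (conv2_ext_l _ _ _ _ _ forest_number_0_0). apply conv2_delta_l.
    + rewrite (conv2_ext_l _ _ _ _ _ (forest_number_S_r 0 j)).
      rewrite conv2_plus_l, conv2_shift_r, (IH 0%nat j n m) by lia.
      simpl Nat.add. rewrite forest_number_S_r.
      destruct m as [|m]; [reflexivity|].
      now rewrite (IH 1%nat (S j) n m) by lia.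
  - rewrite (conv2_ext_l _ _ _ _ _ (forest_number_S_l i j)).
    rewrite conv2_plus_l, conv2_shift_l, (IH i j n m) by lia.
    simpl Nat.add. rewrite forest_number_S_l.
    destruct n as [|n]; [reflexivity|].
    now rewrite (IH (S i) (S j) n m) by lia.
Qed.

Lemma forest_number_narayana n m :
  forest_number 1 0 (S n) m = narayana (S n + m) (m + 1).
Proof.
  unfold forest_number, narayana.
  replace (S n + m + 1)%nat with (S (S (n + m))) by lia.
  replace (S n + m + 0)%nat with (S (n + m)) by lia.
  replace (S n + m)%nat with (S (n + m)) by lia.
  replace (m + 1)%nat with (S m) by lia.
  simpl orb. cbv iota. rewrite Nat.sub_succ, Nat.sub_0_r.
  replace (1 * 0 + 1 * S n + 0 * m)%nat with (S n) by lia.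
  unfold C.
  replace (S (S (n + m)) - S n)%nat with (S m) by lia.
  replace (S (n + m) - m)%nat with (S n) by lia.
  replace (S (n + m) - S m)%nat with n by lia.
  rewrite (INR_fact_S (S (n + m))), (INR_fact_S n).
  pose proof (INR_fact_neq_0 (S (n + m))). pose proof (INR_fact_neq_0 n).
  pose proof (INR_fact_neq_0 (S m)). pose proof (INR_fact_neq_0 m).
  pose proof (pos_INR (n + m)). pose proof (pos_INR n).
  rewrite !S_INR. field. repeat split; auto; lra.
Qed.

(* [P] and [1 - P] ([Q] and [1 - Q]) are the probabilities that the unary
   chain below a type-1 (type-2) vertex ends in a leaf, resp. in a father.  A
   tree with [n] type-1 and [m] type-2 fathers has [m + 1] type-1 and [n]
   type-2 leaves when its root has type 1, [m] and [n + 1] otherwise. *)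
Definition tree_monomial (P Q : R) (ty : bool) (n m : nat) : R :=
  P ^ (m + Nat.b2n ty) * (1 - P) ^ n * Q ^ (n + Nat.b2n (negb ty)) * (1 - Q) ^ m.

Definition pair_monomial (P Q : R) (n m : nat) : R :=
  P ^ (m + 1) * (1 - P) ^ n * Q ^ (n + 1) * (1 - Q) ^ m.

Lemma tree_monomial_mult P Q a b c d :
  tree_monomial P Q true a b * tree_monomial P Q false c d = pair_monomial P Q (a + c) (b + d).
Proof. unfold tree_monomial, pair_monomial. simpl Nat.b2n. rewrite !pow_add. ring. Qed.

Definition tree_limit (P Q : R) (ty : bool) (n m : nat) : R :=
  forest_number (Nat.b2n ty) (Nat.b2n (negb ty)) n m * tree_monomial P Q ty n m.

Lemma conv2_tree_limits P Q n m :
  conv2 (tree_limit P Q true) (tree_limit P Q false) n m =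
  forest_number 1 1 n m * pair_monomial P Q n m.
Proof.
  unfold tree_limit. rewrite conv2_scale with (c := pair_monomial P Q n m).
  - now rewrite conv2_forest_number.
  - intros a b Ha Hb. rewrite tree_monomial_mult. f_equal; lia.
Qed.

Definition subtrees_fathers (ty : bool) (n m : nat) : option (nat * nat) :=
  match ty, n, m with
  | true, S n', _ => Some (n', m)
  | false, _, S m' => Some (n, m')
  | _, _, _ => None
  end.

Lemma subtrees_fathers_lt ty n m n' m' :
  subtrees_fathers ty n m = Some (n', m') -> (n' <= n /\ m' <= m /\ n' + m' < n + m)%nat.
Proof. destruct ty, n, m; simpl; intros E; inversion E; lia. Qed.

Lemma tree_limit_root P Q ty n m :
  tree_limit P Q ty n m =
  (if ty then P else Q) * (if andb (n =? 0) (m =? 0) then 1 else 0) +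
  match subtrees_fathers ty n m with
  | Some (n', m') => (if ty then 1 - P else 1 - Q) * (forest_number 1 1 n' m' * pair_monomial P Q n' m')
  | None => 0
  end.
Proof.
  unfold tree_limit, tree_monomial, pair_monomial.
  destruct ty; simpl Nat.b2n; [rewrite forest_number_S_l | rewrite forest_number_S_r];
    rewrite forest_number_0_0; destruct n, m; simpl; rewrite ?Nat.add_0_r, ?Nat.add_1_r; simpl; ring.
Qed.

Lemma gen_SS f j :
  gen (S f) (S (S j)) =
  map Unary (gen f (S j)) ++
  flat_map (fun i => flat_map (fun l => map (Binary l) (gen f (j - i))) (gen f i)) (seq 0 (S j)).
Proof. reflexivity. Qed.

Lemma gen_fuel_indep f g k : (k <= f)%nat -> (k <= g)%nat -> gen f k = gen g k.
Proof.
  revert g k. induction f as [|f IH]; intros g k Hf Hg.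
  - assert (k = 0)%nat as -> by lia. now destruct g.
  - destruct g as [|g]; [assert (k = 0)%nat as -> by lia; reflexivity|].
    destruct k as [|[|j]]; [reflexivity| now destruct f, g |].
    rewrite !gen_SS, (IH g (S j)) by lia. f_equal.
    rewrite !flat_map_concat_map. f_equal. apply map_ext_in. intros i Hi.
    apply in_seq in Hi. rewrite (IH g i) by lia.
    apply flat_map_ext. intros l. now rewrite (IH g (j - i)%nat) by lia.
Qed.

Definition binary_trees (j : nat) : list tree :=
  flat_map (fun i => flat_map (fun l => map (Binary l) (trees_of_size (j - i))) (trees_of_size i))
           (seq 0 (S j)).

Lemma trees_of_size_S k :
  trees_of_size (S k) =
  map Unary (trees_of_size k) ++ match k with O => [] | S j => binary_trees j end.
Proof.
  destruct k as [|j]; [reflexivity|].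
  unfold trees_of_size at 1. rewrite gen_SS. f_equal. unfold binary_trees.
  rewrite !flat_map_concat_map. f_equal. apply map_ext_in. intros i Hi.
  apply in_seq in Hi. unfold trees_of_size. rewrite (gen_fuel_indep (S j) i i) by lia.
  apply flat_map_ext. intros l. now rewrite (gen_fuel_indep (S j) (j - i) (j - i)) by lia.
Qed.

Lemma sumR_binary_trees (h : tree -> R) (j : nat) :
  sumR (map h (binary_trees j)) =
  sum_f_R0 (fun i => sumR (map (fun l => sumR (map (fun r => h (Binary l r))
                                          (trees_of_size (j - i)))) (trees_of_size i))) j.
Proof.
  unfold binary_trees. rewrite sumR_flat_map, sumR_map_seq. apply sum_eq. intros i _.
  rewrite sumR_flat_map. f_equal. apply map_ext. intros l. now rewrite map_map.
Qed.

Lemma is_series_0 : is_series (fun _ => 0) 0.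
Proof.
  apply is_series_Reals. intros eps Heps. exists 0%nat. intros N _.
  rewrite sum_f_R0_zero by reflexivity. unfold R_dist. rewrite Rminus_0_r, Rabs_R0. lra.
Qed.

Lemma is_series_shift_scal (v : nat -> R) (V c : R) :
  is_series v V -> is_series (fun k => match k with O => 0 | S j => c * v j end) (c * V).
Proof.
  intros HV. apply is_series_decr_1.
  change (is_series (fun k => c * v k) (c * V + - 0)). rewrite Ropp_0, Rplus_0_r.
  exact (is_series_scal c v V HV).
Qed.

Lemma is_series_sum_f_R0 (f : nat -> nat -> R) (l : nat -> R) N :
  (forall a, (a <= N)%nat -> is_series (f a) (l a)) ->
  is_series (fun k => sum_f_R0 (fun a => f a k) N) (sum_f_R0 l N).
Proof.
  induction N as [|N IH]; intros Hf; simpl.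
  - apply Hf. lia.
  - apply (is_series_plus (V := R_NormedModule)); [apply IH; intros|]; apply Hf; lia.
Qed.

(* A sequence obeying [u (S k) = r u k + v k] is the Cauchy product of the
   geometric sequence [r ^ k] with [u 0, v 0, v 1, ...]. *)
Lemma is_series_linear_rec (u v : nat -> R) (r V : R) :
  0 <= r < 1 -> 0 <= u 0%nat -> (forall k, 0 <= v k) ->
  (forall k, u (S k) = r * u k + v k) -> is_series v V ->
  is_series u ((u 0%nat + V) / (1 - r)).
Proof.
  intros Hr Hu0 Hv Hu HV.
  set (w k := match k with O => u 0%nat | S j => v j end).
  assert (Hw : is_series w (u 0%nat + V)).
  { apply is_series_decr_1.
    change (is_series v (u 0%nat + V - u 0%nat)).
    now replace (u 0%nat + V - u 0%nat) with V by ring. }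
  assert (Hconv : forall k, sum_f_R0 (fun i => r ^ i * w (k - i)%nat) k = u k).
  { induction k as [|k IH]; [simpl; ring|].
    rewrite sum_f_R0_shift, Hu, <- IH, scal_sum. simpl. ring_simplify. f_equal.
    apply sum_eq. intros. ring. }
  eapply is_series_ext; [exact Hconv|].
  replace ((u 0%nat + V) / (1 - r)) with (/ (1 - r) * (u 0%nat + V)) by (field; lra).
  apply is_series_mult_pos; [| exact Hw | intros; apply pow_le; lra | intros [|k]; simpl; auto].
  apply is_series_geom. rewrite Rabs_right; lra.
Qed.

Lemma is_series_conv2 (u v : nat -> nat -> nat -> R) (U V : nat -> nat -> R) n m :
  (forall a b k, 0 <= u a b k) -> (forall a b k, 0 <= v a b k) ->
  (forall a b, (a <= n)%nat -> (b <= m)%nat -> is_series (u a b) (U a b) /\ is_series (v a b) (V a b)) ->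
  is_series (fun j => sum_f_R0 (fun i => conv2 (fun a b => u a b i) (fun a b => v a b (j - i)%nat) n m) j)
            (conv2 U V n m).
Proof.
  intros Hu Hv HUV.
  apply (is_series_ext (fun j => sum_f_R0 (fun a => sum_f_R0 (fun b => sum_f_R0 (fun i =>
            u a b i * v (n - a)%nat (m - b)%nat (j - i)%nat) j) m) n)).
  { intros j. symmetry. unfold conv2. rewrite sum_f_R0_swap. apply sum_eq. intros a _.
    now rewrite sum_f_R0_swap. }
  apply is_series_sum_f_R0. intros a Ha. apply is_series_sum_f_R0. intros b Hb.
  apply is_series_mult_pos; [apply HUV; auto | apply HUV; lia | auto | auto].
Qed.

(** * The Galton-Watson tree *)

Section Galton_Watson.

Variables p0 p1 p2 q0 q1 q2 : R.

Local Notation weight := (gw_weight p0 p1 p2 q0 q1 q2).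
Local Notation leaf_prob ty := (if ty then p0 else q0).
Local Notation unary_prob ty := (if ty then p1 else q1).
Local Notation father_prob ty := (if ty then p2 else q2).

Definition counted_weight (ty : bool) (n m : nat) (t : tree) : R :=
  if andb (fathers true ty t =? n) (fathers false ty t =? m) then weight ty t else 0.

(* [mass ty n m k] is the probability that the tree rooted at a type-[ty]
   vertex has [k] edges, [n] type-1 and [m] type-2 fathers; [pair_mass n m j]
   is the same quantity for the two subtrees of a father, [j] edges in all. *)
Definition mass (ty : bool) (n m k : nat) : R :=
  sumR (map (counted_weight ty n m) (trees_of_size k)).

Definition pair_mass (n m j : nat) : R :=
  sum_f_R0 (fun i => conv2 (fun a b => mass true a b i) (fun a b => mass false a b (j - i)) n m) j.

Lemma counted_weight_Unary ty n m u :
  counted_weight ty n m (Unary u) = unary_prob ty * counted_weight ty n m u.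
Proof. unfold counted_weight. cbn [fathers gw_weight]. destruct (andb _ _); ring. Qed.

Lemma counted_weight_Binary ty n m l r :
  counted_weight ty n m (Binary l r) =
  match subtrees_fathers ty n m with
  | Some (n', m') =>
      father_prob ty * conv2 (fun a b => counted_weight true a b l)
                             (fun a b => counted_weight false a b r) n' m'
  | None => 0
  end.
Proof.
  unfold counted_weight. cbn [fathers gw_weight].
  destruct ty, n, m; cbn [subtrees_fathers]; rewrite ?conv2_indicators; simpl;
    rewrite ?Bool.andb_false_r; try destruct (andb _ _); ring.
Qed.

Lemma mass_0 ty n m :
  mass ty n m 0 = leaf_prob ty * (if andb (n =? 0) (m =? 0) then 1 else 0).
Proof. unfold mass, counted_weight. destruct ty, n, m; simpl; ring. Qed.

Lemma sumR_binary_trees_counted_weight ty n m j :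
  sumR (map (counted_weight ty n m) (binary_trees j)) =
  match subtrees_fathers ty n m with
  | Some (n', m') => father_prob ty * pair_mass n' m' j
  | None => 0
  end.
Proof.
  rewrite sumR_binary_trees.
  destruct (subtrees_fathers ty n m) as [[n' m']|] eqn:E.
  - unfold pair_mass. rewrite scal_sum. apply sum_eq. intros i _.
    change (conv2 (fun a b => mass true a b i) (fun a b => mass false a b (j - i)) n' m') with
      (conv2 (fun a b => sumR (map (fun l => counted_weight true a b l) (trees_of_size i)))
             (fun a b => sumR (map (fun r => counted_weight false a b r) (trees_of_size (j - i))))
             n' m').
    rewrite <- sumR_conv2, Rmult_comm, <- sumR_map_scal_l.
    f_equal. apply map_ext. intros l. rewrite <- sumR_map_scal_l.
    f_equal. apply map_ext. intros r. now rewrite counted_weight_Binary, E.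
  - apply sum_f_R0_zero. intros i _. apply sumR_map_0. intros l. apply sumR_map_0. intros r.
    now rewrite counted_weight_Binary, E.
Qed.

Lemma mass_S ty n m k :
  mass ty n m (S k) =
  unary_prob ty * mass ty n m k +
  match subtrees_fathers ty n m with
  | Some (n', m') => match k with O => 0 | S j => father_prob ty * pair_mass n' m' j end
  | None => 0
  end.
Proof.
  unfold mass at 1. rewrite trees_of_size_S, map_app, sumR_app, map_map.
  rewrite (map_ext _ _ (counted_weight_Unary ty n m)), sumR_map_scal_l. f_equal.
  destruct k as [|j].
  - now destruct (subtrees_fathers ty n m) as [[]|].
  - rewrite sumR_binary_trees_counted_weight. now destruct (subtrees_fathers ty n m) as [[]|].
Qed.

Lemma mass_size_fathers n m k :
  mass_size p0 p1 p2 q0 q1 q2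
    (fun t => andb (fathers true true t =? n) (fathers false true t =? m)) k = mass true n m k.
Proof. unfold mass_size, mass. now rewrite sumR_map_filter. Qed.

Hypotheses (Hp0 : 0 <= p0) (Hp1 : 0 <= p1 < 1) (Hp2 : 0 <= p2)
           (Hq0 : 0 <= q0) (Hq1 : 0 <= q1 < 1) (Hq2 : 0 <= q2)
           (Hp : p0 + p1 + p2 = 1) (Hq : q0 + q1 + q2 = 1).

Lemma weight_nonneg ty t : 0 <= weight ty t.
Proof.
  revert ty. induction t as [|u IH|l IHl r IHr]; intros ty; simpl.
  - destruct ty; assumption.
  - apply Rmult_le_pos; [destruct ty; apply Hp1 || apply Hq1 | apply IH].
  - repeat apply Rmult_le_pos; auto. destruct ty; assumption.
Qed.

Lemma mass_nonneg ty n m k : 0 <= mass ty n m k.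
Proof.
  apply sumR_map_nonneg. intros t. unfold counted_weight.
  destruct (andb _ _); [apply weight_nonneg | lra].
Qed.

Lemma pair_mass_nonneg n m j : 0 <= pair_mass n m j.
Proof.
  unfold pair_mass, conv2. apply cond_pos_sum. intros i.
  apply cond_pos_sum. intros a. apply cond_pos_sum. intros b.
  apply Rmult_le_pos; apply mass_nonneg.
Qed.

Local Notation P := (p0 / (p0 + p2)).
Local Notation Q := (q0 / (q0 + q2)).

Lemma is_series_mass n m ty : is_series (mass ty n m) (tree_limit P Q ty n m).
Proof.
  remember (n + m)%nat as K eqn:HK. revert n m HK ty.
  induction K as [K IH] using lt_wf_ind. intros n m HK ty.
  set (V := match subtrees_fathers ty n m with
            | Some (n', m') => father_prob ty * (forest_number 1 1 n' m' * pair_monomial P Q n' m')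
            | None => 0
            end).
  assert (HV : is_series (fun k => match subtrees_fathers ty n m with
                 | Some (n', m') => match k with O => 0 | S j => father_prob ty * pair_mass n' m' j end
                 | None => 0 end) V).
  { unfold V. destruct (subtrees_fathers ty n m) as [[n' m']|] eqn:E; [|apply is_series_0].
    apply is_series_shift_scal. rewrite <- conv2_tree_limits.
    apply subtrees_fathers_lt in E.
    apply is_series_conv2; [intros; apply mass_nonneg .. |].
    intros a b Ha Hb. split; apply (IH (a + b)%nat); lia. }
  replace (tree_limit P Q ty n m) with ((mass ty n m 0 + V) / (1 - unary_prob ty)).
  - eapply is_series_linear_rec; cycle 4;
      [exact HV | now destruct ty | apply mass_nonneg | | apply mass_S].
    intros [|k]; destruct (subtrees_fathers ty n m) as [[]|]; try lra.
    apply Rmult_le_pos; [destruct ty; assumption | apply pair_mass_nonneg].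
  - rewrite mass_0, tree_limit_root. unfold V.
    assert (p0 + p2 <> 0) by lra. assert (q0 + q2 <> 0) by lra.
    destruct ty; [replace (1 - p1) with (p0 + p2) by lra | replace (1 - q1) with (q0 + q2) by lra];
      destruct (subtrees_fathers _ n m) as [[]|]; field; auto.
Qed.

End Galton_Watson.

Theorem theorem4p1 (p0 p1 p2 q0 q1 q2 : R)
  (hp0 : 0 < p0 < 1) (hp1 : 0 < p1 < 1) (hp2 : 0 < p2 < 1)
  (hq0 : 0 < q0 < 1) (hq1 : 0 < q1 < 1) (hq2 : 0 < q2 < 1)
  (hp : p0 + p1 + p2 = 1) (hq : q0 + q1 + q2 = 1)
  (* P(||tau|| < infinity) = 1 *)
  (hfin : infinite_sum (mass_size p0 p1 p2 q0 q1 q2 (fun _ => true)) 1)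
  (n m : nat) (hn : (1 <= n)%nat) :
  let P := p0 / (p0 + p2) in
  let Q := q0 / (q0 + q2) in
  infinite_sum
    (mass_size p0 p1 p2 q0 q1 q2
       (fun t => andb (Nat.eqb (fathers true true t) n) (Nat.eqb (fathers false true t) m)))
    (narayana (n + m) (m + 1) * P ^ (m + 1) * (1 - P) ^ n * Q ^ n * (1 - Q) ^ m).
Proof.
  intros P Q. destruct n as [|n]; [lia|].
  apply is_series_Reals.
  eapply is_series_ext; [intros k; symmetry; apply mass_size_fathers|].
  replace (narayana _ _ * _ * _ * _ * _) with (tree_limit P Q true (S n) m).
  - apply is_series_mass; lra.
  - unfold tree_limit, tree_monomial. cbn [Nat.b2n negb].
    rewrite forest_number_narayana, Nat.add_0_r. ring.
Qed.
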